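(* Let $s$ be one of $s(x)=\sigma(x)$ (Weierstrass sigma function), $s(x)=\sinh x$, $s(x)=x$, let $f(q,p;\alpha)=\frac{s(q+p+\alpha)s(q-p+\alpha)}{s(q+p-\alpha)s(q-p-\alpha)}$, and let $\gamma$ be a constant; set $\alpha=-2\gamma$, $\beta=\gamma$. Let $q(n_1,n_2;y,z)$ satisfy, for all $y,z$, the lattice equation $$f(q,q_{1,0};\alpha)f(q,q_{-1,0};\alpha)f(q,q_{0,1};\beta)f(q,q_{0,-1};\beta)f(q,q_{-1,-1};\gamma)f(q,q_{1,1};\gamma)=1$$ and the flows $$\frac{q_{,y}+1}{q_{,y}-1}=f(q,q_{-1,0};\alpha)f(q,q_{0,1};\beta)f(q,q_{1,1};\gamma),\qquad \frac{q_{,z}+1}{q_{,z}-1}=f(q,q_{-1,0};\alpha)f(q,q_{0,-1};\beta)f(q,q_{-1,-1};\gamma).$$ Fix an integer $j$ and put $u(2k)=q(k,j)$, $u(2k-1)=q(k,j+1)$. Then $u_{,t}:=\tfrac12(u_{,y}+u_{,z})$ satisfies, at every $n\in\mathbb Z$, $$u_{,t}=\frac{1}{f(u,u_2;2\gamma)f(u,u_1;-\gamma)f(u,u_{-1};-\gamma)-1}-\frac{1}{f(u,u_1;-\gamma)f(u,u_{-1};-\gamma)f(u,u_{-2};2\gamma)-1},$$ where $u=u(n)$, $u_m=u(n+m)$.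
   Context: Notation: $q_{i,j}=q(n_1+i,n_2+j)$; subscripts ${,y},{,z},{,t}$ denote partial derivatives. *)

From Stdlib Require Import Reals ZArith List.
From Coquelicot Require Import Coquelicot.
Open Scope C_scope.

Definition Cexp (z : C) : C :=
  (exp (fst z) * cos (snd z), exp (fst z) * sin (snd z))%R.
Definition Csinh (z : C) : C := (Cexp z - Cexp (- z)) / 2.

(* Weierstrass sigma function of the lattice  Z w1 + Z w2  (w1, w2 R-linearly
   independent), defined by its Weierstrass product
     sigma(x) = x * prod_{w in L\{0}} (1 - x/w) exp(x/w + x^2/(2 w^2)),
   the (absolutely convergent) product being taken as the limit of the
   products over the squares  |m|,|n| <= N. *)
Definition sym_range (N : nat) : list Z :=
  map (fun k => (Z.of_nat k - Z.of_nat N)%Z) (seq 0 (2 * N + 1)).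

Definition lattice_pts (w1 w2 : C) (N : nat) : list C :=
  map (fun mn => IZR (fst mn) * w1 + IZR (snd mn) * w2)
      (filter (fun mn => negb (Z.eqb (fst mn) 0 && Z.eqb (snd mn) 0))
              (list_prod (sym_range N) (sym_range N))).

Definition sigma_partial (w1 w2 : C) (N : nat) (x : C) : C :=
  x * fold_right Cmult 1
        (map (fun w => (1 - x / w) * Cexp (x / w + x * x / (2 * (w * w))))
             (lattice_pts w1 w2 N)).

Definition lattice_nondeg (w1 w2 : C) : Prop :=
  (fst w1 * snd w2 - snd w1 * fst w2 <> 0)%R.

Definition is_weierstrass_sigma (w1 w2 : C) (s : C -> C) : Prop :=
  lattice_nondeg w1 w2 /\
  forall x : C, filterlim (fun N => sigma_partial w1 w2 N x) eventually
                          (locally (s x)).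

Definition admissible_s (s : C -> C) : Prop :=
  (exists w1 w2, is_weierstrass_sigma w1 w2 s) \/
  (forall x, s x = Csinh x) \/ (forall x, s x = x).

Definition fqp (s : C -> C) (q p a : C) : C :=
  (s (q + p + a) * s (q - p + a)) / (s (q + p - a) * s (q - p - a)).

Definition f_nondeg (s : C -> C) (q p a : C) : Prop :=
  s (q + p + a) <> 0 /\ s (q - p + a) <> 0 /\
  s (q + p - a) <> 0 /\ s (q - p - a) <> 0.

(* u(2k) = q(k,j),  u(2k-1) = q(k,j+1) *)
Definition u_of (q : Z -> Z -> R -> R -> C) (j : Z) (n : Z) : R -> R -> C :=
  if Z.even n then q (Z.div2 n) j else q (Z.div2 (n + 1)) (j + 1)%Z.

(* At a site of the lattice the two flows say that q_{,y} and q_{,z} are the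
   Cayley preimages w = (Y+1)/(Y-1) of two triple products Y and Z of f's,
   and the lattice equation says that the remaining three f's multiply to
   1/(YZ).  On the chain u, which zig-zags between the rows j and j+1, the two
   triple products of the u-equation consist of those remaining f's and of
   f's with the parameter negated; since f(q,p;-a) = 1/f(q,p;a) they are Z and
   1/Y at even sites (Y and 1/Z at odd ones).  The claim then reduces to the
   identity  w_Y/2 + w_Z/2 = 1 + 1/(Y-1) + 1/(Z-1) = 1/(Z-1) - 1/(1/Y - 1).
   The argument is algebraic: it holds for any function s. *)

From Stdlib Require Import Reals ZArith List Lra Lia.
From Coquelicot Require Import Coquelicot.
Open Scope C_scope.

Lemma fqp_neq0 (s : C -> C) (a b c : C) : f_nondeg s a b c -> fqp s a b c <> 0.
Proof.
  intros (H1 & H2 & H3 & H4) E. apply (Cmult_neq_0 _ _ H1 H2).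
  replace (s (a + b + c) * s (a - b + c))
    with (fqp s a b c * (s (a + b - c) * s (a - b - c))) by (unfold fqp; field; auto).
  rewrite E. ring.
Qed.

Lemma fqp_opp (s : C -> C) (a b c : C) :
  f_nondeg s a b c -> fqp s a b (- c) = / fqp s a b c.
Proof.
  intros (H1 & H2 & H3 & H4). unfold fqp.
  replace (a + b - - c) with (a + b + c) by ring.
  replace (a - b - - c) with (a - b + c) by ring.
  replace (a + b + - c) with (a + b - c) by ring.
  replace (a - b + - c) with (a - b - c) by ring.
  field. auto.
Qed.

Lemma Cminus_neq_0 (x y : C) : x <> y -> x - y <> 0.
Proof.
  intros H E. apply H. replace x with (x - y + y) by ring. rewrite E. ring.
Qed.

Lemma cayley_inv (w Y : C) :
  w <> 1 -> (w + 1) / (w - 1) = Y -> Y <> 1 /\ w = (Y + 1) / (Y - 1).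
Proof.
  intros Hw HY. apply Cminus_neq_0 in Hw.
  assert (E : Y * (w - 1) = w + 1) by (subst Y; field; exact Hw).
  assert (HY1 : Y <> 1).
  { intros ->. assert (E2 : RtoC 2 = 0).
    { replace (RtoC 2) with (w + 1 - 1 * (w - 1)) by ring. rewrite E. ring. }
    injection E2. lra. }
  split; [exact HY1|].
  apply Cminus_neq_0 in HY1.
  replace w with (w * (Y - 1) / (Y - 1)) by (field; exact HY1).
  replace (w * (Y - 1)) with (Y * (w - 1) + Y - w) by ring. rewrite E. f_equal. ring.
Qed.

Lemma cayley_half_sum (wy wz Y Z : C) :
  Y <> 0 -> wy <> 1 -> wz <> 1 ->
  (wy + 1) / (wy - 1) = Y -> (wz + 1) / (wz - 1) = Z ->
  (wy + wz) / 2 = 1 / (Z - 1) - 1 / (/ Y - 1).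
Proof.
  intros HY0 Hwy Hwz FY FZ.
  destruct (cayley_inv _ _ Hwy FY) as [HY1 ->].
  destruct (cayley_inv _ _ Hwz FZ) as [HZ1 ->].
  assert (H1Y : 1 - Y <> 0) by (apply Cminus_neq_0; auto).
  apply Cminus_neq_0 in HY1, HZ1.
  field. repeat split; auto.
Qed.

Lemma flows_half_sum (a1 a2 b1 b2 c1 c2 wy wz : C) :
  a1 <> 0 -> a2 <> 0 -> b1 <> 0 -> c2 <> 0 -> wy <> 1 -> wz <> 1 ->
  a1 * a2 * b1 * b2 * c1 * c2 = 1 ->
  (wy + 1) / (wy - 1) = a2 * b1 * c2 -> (wz + 1) / (wz - 1) = a2 * b2 * c1 ->
  (wy + wz) / 2 = 1 / (/ a1 * / c2 * / b1 - 1) - 1 / (/ c2 * / b1 * / a2 - 1).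
Proof.
  intros Ha1 Ha2 Hb1 Hc2 Hwy Hwz L FY FZ.
  replace (/ a1 * / c2 * / b1) with (a2 * b2 * c1).
  2:{ rewrite <- (Cmult_1_l (/ a1 * _ * _)), <- L. field. auto. }
  replace (/ c2 * / b1 * / a2) with (/ (a2 * b1 * c2)) by (field; auto).
  apply cayley_half_sum; auto using Cmult_neq_0.
Qed.

Section LatticeSite.

Variables (s : C -> C) (gamma : C).
Variables (q0 q10 qm10 q01 q0m1 qm1m1 q11 wy wz : C).

Hypothesis nondeg :
  f_nondeg s q0 q10 ((-2) * gamma) /\ f_nondeg s q0 qm10 ((-2) * gamma) /\
  f_nondeg s q0 q01 gamma /\ f_nondeg s q0 q0m1 gamma /\
  f_nondeg s q0 qm1m1 gamma /\ f_nondeg s q0 q11 gamma.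
Hypothesis flows_neq1 : wy <> 1 /\ wz <> 1.
Hypothesis lattice_eq :
  fqp s q0 q10 ((-2) * gamma) * fqp s q0 qm10 ((-2) * gamma) *
  fqp s q0 q01 gamma * fqp s q0 q0m1 gamma *
  fqp s q0 qm1m1 gamma * fqp s q0 q11 gamma = 1.
Hypothesis y_flow :
  (wy + 1) / (wy - 1) =
  fqp s q0 qm10 ((-2) * gamma) * fqp s q0 q01 gamma * fqp s q0 q11 gamma.
Hypothesis z_flow :
  (wz + 1) / (wz - 1) =
  fqp s q0 qm10 ((-2) * gamma) * fqp s q0 q0m1 gamma * fqp s q0 qm1m1 gamma.

Lemma site_half_sum_even :
  (wy + wz) / 2 =
    1 / (fqp s q0 q10 (2 * gamma) * fqp s q0 q11 (- gamma) *
         fqp s q0 q01 (- gamma) - 1)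
  - 1 / (fqp s q0 q11 (- gamma) * fqp s q0 q01 (- gamma) *
         fqp s q0 qm10 (2 * gamma) - 1).
Proof.
  destruct nondeg as (D1 & D2 & D3 & D4 & D5 & D6). destruct flows_neq1 as [Hy Hz].
  replace (2 * gamma) with (- ((-2) * gamma)) by ring.
  rewrite !fqp_opp by assumption.
  apply flows_half_sum with (b2 := fqp s q0 q0m1 gamma) (c1 := fqp s q0 qm1m1 gamma);
    auto using fqp_neq0.
Qed.

Lemma site_half_sum_odd :
  (wy + wz) / 2 =
    1 / (fqp s q0 q10 (2 * gamma) * fqp s q0 q0m1 (- gamma) *
         fqp s q0 qm1m1 (- gamma) - 1)
  - 1 / (fqp s q0 q0m1 (- gamma) * fqp s q0 qm1m1 (- gamma) *
         fqp s q0 qm10 (2 * gamma) - 1).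
Proof.
  destruct nondeg as (D1 & D2 & D3 & D4 & D5 & D6). destruct flows_neq1 as [Hy Hz].
  replace (2 * gamma) with (- ((-2) * gamma)) by ring.
  rewrite !fqp_opp, Cplus_comm by assumption.
  apply flows_half_sum with (b2 := fqp s q0 q01 gamma) (c1 := fqp s q0 q11 gamma);
    auto using fqp_neq0.
  - rewrite <- lattice_eq. ring.
  - rewrite z_flow. ring.
Qed.

End LatticeSite.

Lemma u_of_spec (q : Z -> Z -> R -> R -> C) (j n k l : Z) :
  (n = 2 * k /\ l = j \/ n = 2 * k - 1 /\ l = j + 1)%Z -> u_of q j n = q k l.
Proof.
  unfold u_of. intros [[-> ->] | [-> ->]].
  - rewrite Z.even_mul. cbn [Z.even orb].
    rewrite Z.div2_div, (Z.mul_comm 2 k), Z.div_mul by lia. reflexivity.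
  - replace (2 * k - 1)%Z with (2 * (k - 1) + 1)%Z by lia.
    rewrite Z.even_add, Z.even_mul. cbn [Z.even orb Bool.eqb].
    replace (2 * (k - 1) + 1 + 1)%Z with (k * 2)%Z by lia.
    rewrite Z.div2_div, Z.div_mul by lia. reflexivity.
Qed.

Theorem mainTheorem7
  (s : C -> C) (gamma : C)
  (q qy qz : Z -> Z -> R -> R -> C) (j : Z) :
  admissible_s s ->
  (* q_{,y} and q_{,z} are the partial derivatives of q *)
  (forall n1 n2 y z, is_derive (fun y' => q n1 n2 y' z) y (qy n1 n2 y z)) ->
  (forall n1 n2 y z, is_derive (fun z' => q n1 n2 y z') z (qz n1 n2 y z)) ->
  (* genericity: all occurring f's are well defined and nonzero,
     and q_{,y} <> 1, q_{,z} <> 1 *)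
  (forall n1 n2 y z,
     let Q d1 d2 := q (n1 + d1)%Z (n2 + d2)%Z y z in
     let al := (-2) * gamma in let be := gamma in
     f_nondeg s (Q 0 0)%Z (Q 1 0)%Z al /\ f_nondeg s (Q 0 0)%Z (Q (-1) 0)%Z al /\
     f_nondeg s (Q 0 0)%Z (Q 0 1)%Z be /\ f_nondeg s (Q 0 0)%Z (Q 0 (-1))%Z be /\
     f_nondeg s (Q 0 0)%Z (Q (-1) (-1))%Z gamma /\
     f_nondeg s (Q 0 0)%Z (Q 1 1)%Z gamma) ->
  (forall n1 n2 y z, qy n1 n2 y z <> 1 /\ qz n1 n2 y z <> 1) ->
  (* lattice equation *)
  (forall n1 n2 y z,
     let Q d1 d2 := q (n1 + d1)%Z (n2 + d2)%Z y z in
     let al := (-2) * gamma in let be := gamma in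
     fqp s (Q 0 0)%Z (Q 1 0)%Z al * fqp s (Q 0 0)%Z (Q (-1) 0)%Z al *
     fqp s (Q 0 0)%Z (Q 0 1)%Z be * fqp s (Q 0 0)%Z (Q 0 (-1))%Z be *
     fqp s (Q 0 0)%Z (Q (-1) (-1))%Z gamma * fqp s (Q 0 0)%Z (Q 1 1)%Z gamma = 1) ->
  (* y-flow *)
  (forall n1 n2 y z,
     let Q d1 d2 := q (n1 + d1)%Z (n2 + d2)%Z y z in
     let al := (-2) * gamma in let be := gamma in
     (qy n1 n2 y z + 1) / (qy n1 n2 y z - 1) =
     fqp s (Q 0 0)%Z (Q (-1) 0)%Z al * fqp s (Q 0 0)%Z (Q 0 1)%Z be *
     fqp s (Q 0 0)%Z (Q 1 1)%Z gamma) ->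
  (* z-flow *)
  (forall n1 n2 y z,
     let Q d1 d2 := q (n1 + d1)%Z (n2 + d2)%Z y z in
     let al := (-2) * gamma in let be := gamma in
     (qz n1 n2 y z + 1) / (qz n1 n2 y z - 1) =
     fqp s (Q 0 0)%Z (Q (-1) 0)%Z al * fqp s (Q 0 0)%Z (Q 0 (-1))%Z be *
     fqp s (Q 0 0)%Z (Q (-1) (-1))%Z gamma) ->
  (* conclusion for u(2k) = q(k,j), u(2k-1) = q(k,j+1), u_{,t} = (u_{,y}+u_{,z})/2 *)
  forall (n : Z) (y z : R),
    let U m := u_of q j (n + m)%Z y z in
    exists uy uz : C,
      is_derive (fun y' => u_of q j n y' z) y uy /\
      is_derive (fun z' => u_of q j n y z') z uz /\
      (uy + uz) / 2 =
        1 / (fqp s (U 0%Z) (U 2%Z) (2 * gamma) * fqp s (U 0%Z) (U 1%Z) (- gamma) *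
             fqp s (U 0%Z) (U (-1)%Z) (- gamma) - 1)
      - 1 / (fqp s (U 0%Z) (U 1%Z) (- gamma) * fqp s (U 0%Z) (U (-1)%Z) (- gamma) *
             fqp s (U 0%Z) (U (-2)%Z) (2 * gamma) - 1).
Proof.
  intros _ Hy Hz ND N1 L FY FZ n y z U. unfold U.
  destruct (Z.Even_or_Odd n) as [[k ->] | [k ->]].
  - exists (qy k j y z), (qz k j y z).
    rewrite (u_of_spec q j (2 * k) k j) by lia.
    split; [apply Hy|]. split; [apply Hz|].
    rewrite (u_of_spec q j (2 * k + 0) (k + 0) (j + 0)),
      (u_of_spec q j (2 * k + 2) (k + 1) (j + 0)),
      (u_of_spec q j (2 * k + 1) (k + 1) (j + 1)),
      (u_of_spec q j (2 * k + -1) (k + 0) (j + 1)),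
      (u_of_spec q j (2 * k + -2) (k + -1) (j + 0)) by lia.
    exact (site_half_sum_even s gamma _ _ _ _ _ _ _ _ _
             (ND k j y z) (N1 k j y z) (L k j y z) (FY k j y z) (FZ k j y z)).
  - exists (qy (k + 1)%Z (j + 1)%Z y z), (qz (k + 1)%Z (j + 1)%Z y z).
    rewrite (u_of_spec q j (2 * k + 1) (k + 1) (j + 1)) by lia.
    split; [apply Hy|]. split; [apply Hz|].
    rewrite (u_of_spec q j (2 * k + 1 + 0) (k + 1 + 0) (j + 1 + 0)),
      (u_of_spec q j (2 * k + 1 + 2) (k + 1 + 1) (j + 1 + 0)),
      (u_of_spec q j (2 * k + 1 + 1) (k + 1 + 0) (j + 1 + -1)),
      (u_of_spec q j (2 * k + 1 + -1) (k + 1 + -1) (j + 1 + -1)),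
      (u_of_spec q j (2 * k + 1 + -2) (k + 1 + -1) (j + 1 + 0)) by lia.
    exact (site_half_sum_odd s gamma _ _ _ _ _ _ _ _ _
             (ND (k + 1)%Z (j + 1)%Z y z) (N1 (k + 1)%Z (j + 1)%Z y z)
             (L (k + 1)%Z (j + 1)%Z y z) (FY (k + 1)%Z (j + 1)%Z y z) (FZ (k + 1)%Z (j + 1)%Z y z)).
Qed.
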